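(* Let $\rho_0,\rho$ be Lévy measures on $(0,+\infty)$, $P_0$ an atomless probability on $\mathbb X$, and $\tilde{\boldsymbol\mu}\sim\mathrm{hCRV}(\rho,\rho_0,P_0)$. Then each marginal $\tilde\mu_i$ is infinitely active (i.e. the marginal Lévy measure $\rho_1(\cdot)=\int_0^{+\infty}P_{\mathrm{ID}(t\rho)}(\cdot)\,\mathrm d\rho_0(t)$ of $\tilde\mu_i$, restricted to $(0,+\infty)$, has infinite total mass) if and only if $$\int_0^{+\infty}\mathrm d\rho_0(t)=\int_0^{+\infty}\mathrm d\rho(t)=+\infty.$$
   Context: Let $\mathbb X$ be a Polish space. A Lévy measure on $(0,+\infty)$ is a σ-finite measure $\rho$ with $\rho((\epsilon,+\infty))<\infty$ and $\int_{(0,\epsilon)}s\,\mathrm d\rho(s)<\infty$ for all $\epsilon>0$; its Laplace exponent is $\psi(\lambda)=\int_0^{+\infty}(1-e^{-\lambda s})\,\mathrm d\rho(s)$. $\mathrm{ID}(\rho)$ is the infinitely divisible distribution on $[0,+\infty)$ with Laplace transform $e^{-\psi(\lambda)}$, with law $P_{\mathrm{ID}(\rho)}$. For a finite (possibly random) measure $m$ on $\mathbb X$, $\tilde\mu\sim\mathrm{CRM}(\rho\otimes m)$ means that (conditionally on $m$) evaluations on pairwise disjoint Borel sets are independent and $E[e^{-\lambda\tilde\mu(A)}]=e^{-m(A)\psi(\lambda)}$. $\tilde{\boldsymbol\mu}=(\tilde\mu_1,\dots,\tilde\mu_d)\sim\mathrm{hCRV}(\rho,\rho_0,P_0)$ means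 $\tilde\mu_0\sim\mathrm{CRM}(\rho_0\otimes P_0)$ and, conditionally on $\tilde\mu_0$, the $\tilde\mu_i$ are independent with $\tilde\mu_i\sim\mathrm{CRM}(\rho\otimes\tilde\mu_0)$. Each $\tilde\mu_i$ is then a completely random measure with Lévy intensity $\rho_1\otimes P_0$, $\rho_1$ as in the claim. A CRM is infinitely active if its Lévy measure on $(0,\infty)$ has infinite mass. *)

From HB Require Import structures.
From mathcomp Require Import all_boot all_order all_algebra.
From mathcomp Require Import all_classical all_reals all_analysis.
Set Implicit Arguments. Unset Strict Implicit. Unset Printing Implicit Defensive.
Import Order.TTheory GRing.Theory Num.Theory.
Local Open Scope classical_set_scope.
Local Open Scope ring_scope.

(* Measures on (0,+oo) are represented as measures on the Borel sets of R
   giving no mass to ]-oo,0]. *)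

Definition levy_measure (R : realType) (rho : {measure set R -> \bar R}) : Prop :=
  [/\ rho [set` (`]-oo, 0])%R] = 0%E,
      sigma_finite setT rho &
      forall eps : R, 0 < eps ->
        (rho [set` (`]eps, +oo[)%R] < +oo)%E /\
        (\int[rho]_(s in [set` (`]0, eps[)%R]) s%:E < +oo)%E ].

Definition laplace_exponent (R : realType) (rho : {measure set R -> \bar R})
    (l : R) : \bar R :=
  (\int[rho]_(s in [set` (`]0, +oo[)%R]) (1 - expR (- (l * s)))%:E)%E.

Definition is_ID (R : realType) (rho : {measure set R -> \bar R})
    (Q : probability R R) : Prop :=
  Q [set` (`]-oo, 0[)%R] = 0%E /\
  forall l : R, 0 <= l ->
    (\int[Q]_x (expR (- (l * x)))%:E = expeR (- laplace_exponent rho l))%E.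

Definition scaled_measure (R : realType) (t : R) (ht : 0 < t)
    (rho : {measure set R -> \bar R}) : {measure set R -> \bar R} :=
  mscale (NngNum (ltW ht)) rho.

From HB Require Import structures.
From mathcomp Require Import all_boot all_order all_algebra.
From mathcomp Require Import all_classical all_reals all_analysis.
From mathcomp Require Import measurable_realfun lra.
Import Order.TTheory GRing.Theory Num.Theory.
Local Open Scope classical_set_scope.
Local Open Scope ring_scope.

(* Let P_t be the law of ID(t rho).  If rho has infinite mass, its Laplace
   exponent is unbounded, so P_t({0}) <= exp(-psi_t(l)) vanishes and
   P_t((0,+oo)) = 1: the mass is rho0((0,+oo)) = +oo exactly when rho0 is
   infinite.  If rho has finite mass c, comparing the Laplace transform with
   1 - t c gives P_t((0,+oo)) <= min(t c, 1), which is rho0-integrable for any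
   Levy measure rho0; and P_t((0,+oo)) <= 1 always, so an infinite marginal mass
   forces rho0 to be infinite. *)

Lemma expRN_le_inv (R : realType) (y : R) : 0 < y -> expR (- y) <= y^-1.
Proof.
move=> y0; rewrite expRN lef_pV2 ?posrE ?expR_gt0 //.
by apply: le_trans (expR_ge1Dx y); rewrite lerDr.
Qed.

Lemma measurable_expRNM (R : realType) (l : R) (D : set R) :
  measurable_fun D (fun x : R => expR (- (l * x))).
Proof.
apply: measurableT_comp; first exact: measurable_expR.
have -> : (fun x : R => - (l * x)) = cst (- l) \* id.
  by apply/funext => x /=; rewrite mulNr.
exact: measurable_funM.
Qed.

Lemma onem_expRNM_ge0 (R : realType) (l x : R) :
  0 <= l -> 0 <= x -> 0 <= 1 - expR (- (l * x)).
Proof. by move=> l0 x0; rewrite subr_ge0 expR_le1 oppr_le0 mulr_ge0. Qed.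

Local Open Scope ereal_scope.

Section measure_itv0y.
Context {R : realType}.

Lemma bigcup_itv_invSn_y :
  \bigcup_n [set` (`]n.+1%:R^-1, +oo[)%R] = [set` (`]0, +oo[)%R] :> set R.
Proof.
apply/seteqP; split => x /=.
  case=> n _ /=; rewrite !in_itv /= !andbT; apply: lt_trans.
  by rewrite invr_gt0.
rewrite in_itv /= andbT => x0.
have [n] := ltr_add_invr x0; rewrite add0r => nx.
by exists n => //=; rewrite in_itv /= andbT.
Qed.

Lemma measure_itv0y_gt (mu : {measure set R -> \bar R}) (K : \bar R) :
  K < mu [set` (`]0, +oo[)%R] -> exists n : nat, K < mu [set` (`]n.+1%:R^-1, +oo[)%R].
Proof.
move=> Kmu; apply: contrapT => /forallNP muK.
have nd_itv : nondecreasing_seq (fun n => [set` (`]n.+1%:R^-1, +oo[)%R] : set R).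
  move=> m n mn; apply/subsetPset => x; rewrite /= !in_itv /= !andbT.
  by apply: le_lt_trans; rewrite lef_pV2 ?posrE ?ltr0n // ler_nat ltnS.
have := @nondecreasing_cvg_mu _ _ _ mu _ (fun n => measurable_itv _) _ nd_itv.
rewrite bigcup_itv_invSn_y => /(_ (measurable_itv _)) mu_cvg.
have mu_le : \forall n \near \oo, mu [set` (`]n.+1%:R^-1, +oo[)%R] <= K.
  by apply: nearW => n; rewrite leNgt; apply/negP; exact: muK.
have := lime_le (cvgP _ mu_cvg) mu_le.
rewrite (cvg_lim _ mu_cvg) // => lim_le.
by move: (lim_le eventually_filter); rewrite leNgt Kmu.
Qed.

End measure_itv0y.

Lemma scaled_measureE {R : realType} (rho : {measure set R -> \bar R})
    (t : R) (t0 : (0 < t)%R) (A : set R) :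
  scaled_measure t0 rho A = t%:E * rho A.
Proof. by []. Qed.

Section laplace_exponent.
Context {R : realType} {rho : {measure set R -> \bar R}}.

Let measurable_onem_expRNM (l : R) : measurable_fun ([set` (`]0, +oo[)%R] : set R)
  (fun x : R => (1 - expR (- (l * x)))%:E).
Proof. by apply/measurable_EFinP/measurable_funB => //; exact: measurable_expRNM. Qed.

Lemma laplace_exponent_le_mass (l : R) : (0 <= l)%R ->
  laplace_exponent rho l <= rho [set` (`]0, +oo[)%R].
Proof.
move=> l0; rewrite -[leRHS]mul1e -integral_cst //.
apply: ge0_le_integral => //.
- by move=> x; rewrite /= in_itv /= andbT => x0; rewrite lee_fin onem_expRNM_ge0 // ltW.
- by move=> x _; rewrite lee_fin lerBlDr lerDl expR_ge0.
Qed.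

Lemma laplace_exponent_ge (l : R) : (0 < l)%R ->
  (1 - expR (-1))%:E * rho [set` (`]l^-1, +oo[)%R] <= laplace_exponent rho l.
Proof.
move=> l0; rewrite -integral_cst //.
have l_pos : [set` (`]l^-1, +oo[)%R] `<=` [set` (`]0, +oo[)%R].
  by move=> x; rewrite /= !in_itv /= !andbT; apply: lt_trans; rewrite invr_gt0.
apply: le_trans (ge0_subset_integral _ _ _ _ _ l_pos) => //.
- apply: ge0_le_integral => //.
  + by move=> x _; rewrite lee_fin subr_ge0 expR_le1 oppr_le0.
  + by apply: measurable_funS (measurable_onem_expRNM l).
  + move=> x; rewrite /= in_itv /= andbT => lx.
    rewrite lee_fin lerB // ler_expR lerN2 ltW //.
    by rewrite -ltr_pdivrMl // mulr1.
- by move=> x; rewrite /= in_itv /= andbT => x0; rewrite lee_fin onem_expRNM_ge0 ?ltW.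
Qed.

Lemma laplace_exponent_unbounded : rho [set` (`]0, +oo[)%R] = +oo ->
  forall M : R, exists2 l : R, (0 <= l)%R & M%:E <= laplace_exponent rho l.
Proof.
move=> rho_oo M.
have c0 : (0 < 1 - expR (-1) :> R)%R by rewrite subr_gt0 expR_lt1 oppr_lt0.
have [n Mn] : exists n : nat,
    (M / (1 - expR (-1)))%:E < rho [set` (`]n.+1%:R^-1, +oo[)%R].
  by apply: measure_itv0y_gt; rewrite rho_oo ltry.
exists n.+1%:R => //; apply: le_trans (@laplace_exponent_ge n.+1%:R _) => //.
rewrite -(divfK (lt0r_neq0 c0) M) mulrC EFinM.
by rewrite lee_pmul2l ?lte_fin // ltW.
Qed.

End laplace_exponent.

Section infinitely_divisible.
Context {R : realType} {rho : {measure set R -> \bar R}} {Q : probability R R}.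
Hypothesis Q_ID : is_ID rho Q.

Lemma laplace_transform_le (l d : R) :
  Q [set` (`]-oo, 0[)%R] = 0 -> (0 <= l)%R -> (0 < d)%R ->
  \int[Q]_x (expR (- (l * x)))%:E <= Q [set` (`]-oo, d])%R] + (expR (- (l * d)))%:E.
Proof.
move=> Q_neg l0 d0.
have md : measurable ([set` (`]-oo, d])%R] : set R) by exact: measurable_itv.
have m_indic : measurable_fun [set: R] (fun x => (\1_[set` (`]-oo, d])%R] x : R)%:E).
  exact/measurable_EFinP/measurable_indic.
have -> : Q [set` (`]-oo, d])%R] = \int[Q]_x (\1_[set` (`]-oo, d])%R] x : R)%:E.
  by rewrite integral_indic // setIT.
rewrite -[X in _ + X]mule1 -(probability_setT Q) -integral_cst //.
rewrite -ge0_integralD //; last by move=> x _; rewrite lee_fin expR_ge0.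
apply: ae_ge0_le_integral => //.
- by apply/measurable_EFinP; exact: measurable_expRNM.
- by move=> x _; rewrite adde_ge0 // lee_fin expR_ge0.
- exact: emeasurable_funD.
exists [set` (`]-oo, 0[)%R]; split => //.
move=> x /=; rewrite in_itv /=; apply: contra_notT; rewrite -leNgt => x0 _.
rewrite indicE; have [xd|] := boolP (x \in _).
  rewrite mulr1n lee_fin -[X in (X <= _)%R]addr0 lerD ?expR_ge0 //.
  by rewrite expR_le1 oppr_le0 mulr_ge0.
rewrite notin_setE /= in_itv /= => /negP; rewrite -ltNge => dx.
by rewrite mulr0n add0e lee_fin ler_expR lerN2 ler_wpM2l // ltW.
Qed.

Lemma ID_atom0_le (l : R) : (0 <= l)%R ->
  Q [set 0%R] <= expeR (- laplace_exponent rho l).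
Proof.
move=> l0; case: Q_ID => _ <- //.
have -> : Q [set 0%R] = \int[Q]_(x in [set 0%R]) (expR (- (l * x)))%:E.
  rewrite (eq_integral (cst 1)) ?integral_cst ?mul1e //.
  by move=> x /[!inE] ->; rewrite mulr0 oppr0 expR0.
apply: ge0_subset_integral => //.
by apply/measurable_EFinP; exact: measurable_expRNM.
Qed.

Lemma ID_atom0 : rho [set` (`]0, +oo[)%R] = +oo -> Q [set 0%R] = 0.
Proof.
move=> rho_oo; apply/eqP; rewrite eq_le measure_ge0 andbT.
apply/lee_addgt0Pr => e e0; rewrite add0e.
have [l l0 le_psi] := laplace_exponent_unbounded rho_oo (e^-1).
apply: le_trans (@ID_atom0_le l l0) _.
apply: le_trans (_ : expeR (- e^-1%:E) <= _); first by rewrite lee_expeR leeN2.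
rewrite /= lee_fin -[leRHS]invrK.
by apply: expRN_le_inv; rewrite invr_gt0.
Qed.

Lemma ID_itv0y_eq1 : rho [set` (`]0, +oo[)%R] = +oo -> Q [set` (`]0, +oo[)%R] = 1.
Proof.
move=> /ID_atom0 Q0; case: Q_ID => Q_neg _.
have Q_nonpos : Q [set` (`]-oo, 0])%R] = 0.
  by rewrite -(@setUitv1 _ _ _ _ true) // null_set_setU //; exact: measurable_itv.
by rewrite -setCitvl probability_setC ?Q_nonpos ?sube0 //; exact: measurable_itv.
Qed.

Lemma ID_itvy_le (c d : R) : rho [set` (`]0, +oo[)%R] = c%:E -> (0 < d)%R ->
  Q [set` (`]d, +oo[)%R] <= c%:E.
Proof.
move=> rho_c d0; case: Q_ID => Q_neg Q_laplace.
(* 1 - c <= exp(-psi(l)) <= Q(]-oo, d]) + exp(-l d), with exp(-l d) <= e for l = 1/(d e). *)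
have md : measurable ([set` (`]-oo, d])%R] : set R) by exact: measurable_itv.
have Qd := fineK (fin_num_measure Q _ md); set a := fine _ in Qd.
rewrite -setCitvl probability_setC // -Qd -EFinB.
apply/lee_addgt0Pr => e e0; rewrite -EFinD lee_fin.
pose l := (d * e)^-1%R.
have l0 : (0 <= l)%R by rewrite invr_ge0 mulr_ge0 // ltW.
have le_a : (expR (- c) <= a + expR (- (l * d)))%R.
  rewrite -lee_fin EFinD Qd.
  apply: le_trans _ (laplace_transform_le l d Q_neg l0 d0).
  rewrite Q_laplace //; change (expeR (- c%:E) <= expeR (- laplace_exponent rho l)).
  by rewrite lee_expeR leeN2 -rho_c laplace_exponent_le_mass.
have le_e : (expR (- (l * d)) <= e)%R.
  rewrite /l invfM mulrAC mulVf ?mul1r ?gt_eqF // -[leRHS]invrK.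
  by apply: expRN_le_inv; rewrite invr_gt0.
have := expR_ge1Dx (- c)%R; lra.
Qed.

Lemma ID_itv0y_le (c : R) : rho [set` (`]0, +oo[)%R] = c%:E ->
  Q [set` (`]0, +oo[)%R] <= c%:E.
Proof.
move=> rho_c; rewrite leNgt; apply/negP => /measure_itv0y_gt[n].
by apply/negP; rewrite -leNgt; apply: ID_itvy_le; rewrite ?invr_gt0.
Qed.

End infinitely_divisible.

Lemma levy_integral_min_lty {R : realType} (rho0 : {measure set R -> \bar R})
    (c : R) : levy_measure rho0 -> (0 <= c)%R ->
  \int[rho0]_(t in [set` (`]0, +oo[)%R]) (Num.min (t * c) 1)%:E < +oo.
Proof.
move=> [_ _ rho0_levy] c0.
have min_ge0 (t : R) : (0 <= t)%R -> 0 <= (Num.min (t * c) 1)%:E.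
  by move=> t0; rewrite lee_fin le_min mulr_ge0 // ler01.
have mmin : measurable_fun [set: R] (fun t => (Num.min (t * c) 1)%:E).
  by apply/measurable_EFinP/measurable_minr => //; exact: measurable_funM.
rewrite (@itv_bndbnd_setU _ _ _ (BLeft 1%R)) ?bnd_simp //.
rewrite ge0_integral_setU //; first last.
- apply/disj_setPS => x [] /=; rewrite !in_itv /= andbT => /andP[_ x1] /(lt_le_trans x1).
  by rewrite ltxx.
- move=> x; rewrite /= !in_itv /= andbT => -[/andP[x0 _]|x1]; apply: min_ge0.
    exact: ltW.
  exact: le_trans x1.
- exact: measurable_funS mmin.
apply: lte_add_pinfty.
- apply: le_lt_trans (_ : \int[rho0]_(t in [set` (`]0, 1[)%R]) (c%:E * t%:E) < +oo).
    apply: ge0_le_integral => //.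
    + by move=> x; rewrite /= in_itv /= => /andP[x0 _]; apply/min_ge0/ltW.
    + exact: measurable_funS mmin.
    + by apply/measurable_EFinP; exact: measurable_funM.
    + by move=> x _; rewrite -EFinM lee_fin mulrC ge_min lexx.
  rewrite ge0_integralZl //; last by move=> x; rewrite /= in_itv /= lee_fin => /andP[/ltW].
  by apply: lte_mul_pinfty => //; case: (rho0_levy 1%R ltr01).
- apply: le_lt_trans (_ : \int[rho0]_(t in [set` (`[1, +oo[)%R]) (cst 1 t) < +oo).
    apply: ge0_le_integral => //.
    + by move=> x; rewrite /= in_itv /= andbT => x1; apply/min_ge0/(le_trans ler01 x1).
    + exact: measurable_funS mmin.
    + by move=> x _; rewrite lee_fin ge_min lexx orbT.
  rewrite integral_cst // mul1e.
  have half_gt0 : (0 < 2^-1 :> R)%R by rewrite invr_gt0.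
  apply: le_lt_trans (proj1 (rho0_levy _ half_gt0)).
  apply: le_measure; rewrite ?inE; try exact: measurable_itv.
  move=> x; rewrite /= !in_itv /= !andbT; apply: lt_le_trans.
  by rewrite invf_lt1 // ltr1n.
Qed.

(* The integrand t |-> P t A of the theorem is not known to be measurable. *)
Lemma ge0_le_integral_nonmeasurable {R : realType} (mu : {measure set R -> \bar R})
    (D : set R) (f1 f2 : R -> \bar R) :
  (forall x, D x -> 0 <= f1 x) -> (forall x, D x -> f1 x <= f2 x) ->
  \int[mu]_(x in D) f1 x <= \int[mu]_(x in D) f2 x.
Proof.
move=> f10 f12.
have f20 x : D x -> 0 <= f2 x by move=> Dx; exact: le_trans (f10 _ Dx) (f12 _ Dx).
rewrite (ge0_integralE _ f10) (ge0_integralE _ f20).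
apply: ereal_sup_le => _ [h /= hf <-]; exists h => //= x.
apply: le_trans (hf x) _; rewrite /patch; case: ifP => // /[!inE] Dx; exact: f12.
Qed.

Local Close Scope ereal_scope.

Theorem mainTheorem4 (R : realType) (rho0 rho : {measure set R -> \bar R})
    (P : R -> probability R R) :
  levy_measure rho0 -> levy_measure rho ->
  (forall (t : R) (ht : 0 < t), is_ID (scaled_measure ht rho) (P t)) ->
  ((\int[rho0]_(t in [set` (`]0, +oo[)%R]) P t [set` (`]0, +oo[)%R] = +oo)%E <->
   (rho0 [set` (`]0, +oo[)%R] = +oo /\ rho [set` (`]0, +oo[)%R] = +oo)%E).
Proof.
Local Open Scope ereal_scope.
move=> rho0_levy _ P_ID.
split=> [rho1_oo|[rho0_oo rho_oo]]; last first.
  rewrite (eq_integral (cst 1)) ?integral_cst ?mul1e // => t.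
  rewrite inE /= in_itv /= andbT => t0; apply: ID_itv0y_eq1 (P_ID t t0) _.
  by rewrite scaled_measureE rho_oo mulry gtr0_sg ?mul1e.
split.
  apply/eqP; rewrite eq_le leey /= -rho1_oo -[leRHS]mul1e -integral_cst //.
  by apply: ge0_le_integral_nonmeasurable => // t _; exact: probability_le1.
apply/eqP/negPn/negP; rewrite -ltey -ge0_fin_numE // => rho_fin.
have rho_c := fineK rho_fin; set c := fine _ in rho_c.
have c0 : (0 <= c)%R by rewrite -lee_fin rho_c.
have /lt_eqF : \int[rho0]_(t in [set` (`]0, +oo[)%R]) P t [set` (`]0, +oo[)%R] < +oo.
  apply: le_lt_trans _ (levy_integral_min_lty _ _ rho0_levy c0).
  apply: ge0_le_integral_nonmeasurable => // t; rewrite /= in_itv /= andbT => t0.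
  rewrite EFin_min le_min probability_le1 // andbT.
  by apply: ID_itv0y_le (P_ID t t0) _ _; rewrite scaled_measureE -rho_c.
by rewrite rho1_oo eqxx.
Qed.
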